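(* Let $m>n$ be positive integers and let $G[V_1,V_2]$ be a balanced bipartite graph on $2(m+n-1)$ vertices (so $|V_1|=|V_2|=m+n-1$) with minimum degree $\delta(G)>\frac{3}{4}(m+n-1)$. Suppose a red-blue coloring of the edges of $G$ has no red connected $m$-matching. Then there is a connected component $C$ of the blue subgraph with $|V(C)\cap V_1|\ge n$ and $|V(C)\cap V_2|\ge n$.
   Context: For a red-blue edge coloring of $G$, the red subgraph (resp. blue subgraph) is the spanning subgraph of $G$ consisting of all red (resp. blue) edges; a red (blue) component is a connected component of it. A connected $k$-matching in a graph $H$ is a matching with $k$ edges all lying in a single connected component of $H$; a red connected $k$-matching is a connected $k$-matching in the red subgraph. *)

From mathcomp Require Import all_boot.
Set Implicit Arguments. Unset Strict Implicit. Unset Printing Implicit Defensive.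

Definition simple_graph (T : finType) (e : rel T) : Prop :=
  symmetric e /\ irreflexive e.

Definition bipartite_with (T : finType) (e : rel T) (V1 : {set T}) : Prop :=
  forall x y, e x y -> (x \in V1) != (y \in V1).

Definition degree (T : finType) (e : rel T) (v : T) : nat := #|[set u | e v u]|.

(* A red-blue colouring is given by a symmetric relation [red]; an edge xy of
   G is red if red x y, blue otherwise. *)
Definition red_sub (T : finType) (e red : rel T) : rel T :=
  fun x y => e x y && red x y.
Definition blue_sub (T : finType) (e red : rel T) : rel T :=
  fun x y => e x y && ~~ red x y.

Definition is_matching (T : finType) (H : rel T) (M : seq (T * T)) : Prop :=
  all (fun p => H p.1 p.2) M /\ uniq (flatten [seq [:: p.1; p.2] | p <- M]).

(* A connected k-matching in H: a matching with k edges all lying in a single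
   connected component of H (the component of some vertex r). *)
Definition connected_matching (T : finType) (H : rel T) (k : nat) : Prop :=
  exists M : seq (T * T), [/\ is_matching H M, size M = k &
    exists r : T, all (fun p => connect H r p.1 && connect H r p.2) M].

From mathcomp Require Import all_boot zify.
Set Implicit Arguments. Unset Strict Implicit. Unset Printing Implicit Defensive.

(* Write N = m + n - 1.  Since every degree exceeds 3N/4, a vertex has a neighbour in
   every set of at least N/4 vertices of the other part, and two vertices of one part
   have a common neighbour in every set of at least N/2 vertices of the other part.
   So if S ⊆ P ⊆ V1 and W ⊆ Q ⊆ V2 are large enough and all edges of G between S and Q
   and between P and W are blue, these edges tie together a blue component meeting
   both parts in at least n vertices.  Such sets come from the red components.  If one
   of them meets both parts in at least m vertices, the lack of a red connected
   m-matching yields, by the König–Ore deficiency form of Hall's theorem, a cover of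
   its red edges by fewer than m vertices; if one meets a part in at least n but not
   both parts in m vertices, it and the complement of its other side will do; and if
   all red components have fewer than n vertices in each part, an edge leaving the red
   component of one of its ends is blue, and its blue component is already large. *)

Lemma subset_leq_cardU (T : finType) (A B C : {set T}) :
  A \subset B :|: C -> #|A| <= #|B| + #|C|.
Proof. by move=> sA; apply: leq_trans (subset_leq_card sA) (leq_card_setU B C). Qed.

Definition comp_in (T : finType) (H : rel T) (X : {set T}) (r : T) : {set T} :=
  [set y in X | connect H r y].

Section Components.
Variables (T : finType) (H : rel T).
Implicit Types X A : {set T}.

Lemma comp_in_sub X r : comp_in H X r \subset X.
Proof. by apply/subsetP => y; rewrite inE => /andP []. Qed.

Lemma card_comp_in X A r :
  A \subset X -> {in A, forall a, connect H r a} -> #|A| <= #|comp_in H X r|.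
Proof.
move=> sA Ar; apply: subset_leq_card; apply/subsetP => a aA.
by rewrite inE (subsetP sA _ aA) Ar.
Qed.

Lemma comp_in_trans X r s : connect H r s -> comp_in H X s \subset comp_in H X r.
Proof.
move=> crs; apply/subsetP => y; rewrite !inE => /andP [-> csy].
exact: connect_trans crs csy.
Qed.

End Components.

Section HallDeficiency.
Variables (T : finType) (H : rel T).
Implicit Types P Q S X Y : {set T}.

Definition verts (M : seq (T * T)) : seq T := flatten [seq [:: p.1; p.2] | p <- M].

Definition edge_between (P Q : {set T}) (p : T * T) : bool :=
  [&& p.1 \in P, p.2 \in Q & H p.1 p.2].

Definition matching_between (P Q : {set T}) (M : seq (T * T)) : bool :=
  all (edge_between P Q) M && uniq (verts M).

Definition nbhd_in (Q S : {set T}) : {set T} := [set y in Q | [exists x in S, H x y]].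

Definition hall_condition (P Q : {set T}) (k : nat) : Prop :=
  forall S, S \subset P -> k <= #|P :\: S| + #|nbhd_in Q S|.

Lemma verts_cat M1 M2 : verts (M1 ++ M2) = verts M1 ++ verts M2.
Proof. by rewrite /verts map_cat flatten_cat. Qed.

Lemma mem_verts_between P Q M z :
  all (edge_between P Q) M -> z \in verts M -> (z \in P) || (z \in Q).
Proof.
elim: M => //= -[a b] M IH /andP [/and3P [/= aP bQ _] allM].
rewrite !inE => /or3P [/eqP -> | /eqP -> | zM]; rewrite ?aP ?bQ ?orbT //.
exact: IH.
Qed.

Lemma matching_betweenS P Q P' Q' M : P \subset P' -> Q \subset Q' ->
  matching_between P Q M -> matching_between P' Q' M.
Proof.
move=> sP sQ /andP [allM uM]; rewrite /matching_between uM andbT.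
apply: sub_all allM => -[a b] /and3P [/= aP bQ hab].
by rewrite /edge_between /= (subsetP sP _ aP) (subsetP sQ _ bQ).
Qed.

Lemma matching_between_cat P Q P1 Q1 M1 M2 : [disjoint P & Q] ->
  P1 \subset P -> Q1 \subset Q -> matching_between P1 Q1 M1 ->
  matching_between (P :\: P1) (Q :\: Q1) M2 -> matching_between P Q (M1 ++ M2).
Proof.
move=> dPQ sP1 sQ1 match1 match2.
have /andP [all1 _] := matching_betweenS sP1 sQ1 match1.
have /andP [all2 _] := matching_betweenS (subsetDl P P1) (subsetDl Q Q1) match2.
case/andP: match1 match2 => in1 u1 /andP [in2 u2].
rewrite /matching_between all_cat all1 all2 verts_cat cat_uniq u1 u2 /= andbT.
apply/hasPn => z z2; apply/negP => z1.
case/orP: (mem_verts_between in1 z1) => [zP1 | zQ1];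
  case/orP: (mem_verts_between in2 z2); rewrite !inE ?zP1 ?zQ1 //= => /andP [_ z'].
- by rewrite (disjointFr dPQ (subsetP sP1 _ zP1)) in z'.
- by rewrite (disjointFl dPQ (subsetP sQ1 _ zQ1)) in z'.
Qed.

Lemma nbhd_in_sub Q S : nbhd_in Q S \subset Q.
Proof. by apply/subsetP => y; rewrite inE => /andP []. Qed.

Lemma mem_nbhd_in Q S a b : a \in S -> b \in Q -> H a b -> b \in nbhd_in Q S.
Proof. by move=> aS bQ hab; rewrite inE bQ; apply/existsP; exists a; rewrite aS. Qed.

Lemma nbhd_in0 Q : nbhd_in Q set0 = set0.
Proof. by apply/setP => y; rewrite !inE; apply/andP => -[_ /existsP [x]]; rewrite inE. Qed.

Lemma hall_condition_card P Q k : hall_condition P Q k -> k <= #|P|.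
Proof. by move/(_ set0 (sub0set P)); rewrite setD0 nbhd_in0 cards0 addn0. Qed.

Lemma hall_condition_tight_in P Q S0 k : hall_condition P Q k -> S0 \subset P ->
  #|P :\: S0| + #|nbhd_in Q S0| <= k ->
  hall_condition S0 (nbhd_in Q S0) #|nbhd_in Q S0|.
Proof.
move=> hall sS0 tight S sS.
have := hall S (subset_trans sS sS0).
have : #|P :\: S| <= #|P :\: S0| + #|S0 :\: S|.
  apply: subset_leq_cardU; apply/subsetP => x; rewrite !inE.
  by case: (x \in S0); case: (x \in S); case: (x \in P).
have : #|nbhd_in Q S| <= #|nbhd_in (nbhd_in Q S0) S|.
  apply/subset_leq_card/subsetP => y; rewrite !inE => /andP [-> /existsP [x /andP [xS hxy]]].
  by rewrite /=; apply/andP; split; apply/existsP; exists x; rewrite hxy ?xS ?(subsetP sS _ xS).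
lia.
Qed.

Lemma hall_condition_tight_out P Q S0 k : hall_condition P Q k -> S0 \subset P ->
  #|P :\: S0| + #|nbhd_in Q S0| <= k ->
  hall_condition (P :\: S0) (Q :\: nbhd_in Q S0) #|P :\: S0|.
Proof.
move=> hall sS0 tight S sS.
have := hall (S0 :|: S); rewrite -setDDl subUset sS0 (subset_trans sS (subsetDl _ _)).
have : #|nbhd_in Q (S0 :|: S)| <= #|nbhd_in Q S0| + #|nbhd_in (Q :\: nbhd_in Q S0) S|.
  apply/subset_leq_cardU/subsetP => y; rewrite !inE => /andP [yQ /existsP [x]].
  rewrite yQ inE andbT /= => /andP [/orP [xS0 | xS] hxy].
    by apply/orP; left; apply/existsP; exists x; rewrite xS0.
  by case: existsP => //= _; apply/existsP; exists x; rewrite xS.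
move=> ? /(_ isT); lia.
Qed.

Lemma hall_condition_remove P Q k p q : hall_condition P Q k.+1 ->
  (forall S, S \subset P -> S != set0 -> S != P -> k.+1 < #|P :\: S| + #|nbhd_in Q S|) ->
  p \in P -> hall_condition (P :\ p) (Q :\ q) k.
Proof.
move=> hall slack pP S sS.
have [-> | S_nz] := eqVneq S set0.
  move: (hall_condition_card hall).
  by rewrite nbhd_in0 cards0 setD0 (cardsD1 p P) pP; lia.
have pS : p \notin S by apply/negP => /(subsetP sS); rewrite !inE eqxx.
have S_P : S != P by apply: contraNneq pS => ->.
have hP : #|P :\: S| <= #|P :\ p :\: S| + #|[set p]|.
  apply: subset_leq_cardU; apply/subsetP => x; rewrite !inE.
  by case: (x == p); case: (x \in S); case: (x \in P).
have hQ : #|nbhd_in Q S| <= #|nbhd_in (Q :\ q) S| + #|[set q]|.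
  apply/subset_leq_cardU/subsetP => y; rewrite !inE => /andP [-> ->].
  by case: eqP.
rewrite !cards1 in hP hQ.
by have := slack S (subset_trans sS (subsetDl P _)) S_nz S_P; lia.
Qed.

Theorem hall_deficiency P Q k : [disjoint P & Q] -> hall_condition P Q k ->
  exists2 M, matching_between P Q M & size M = k.
Proof.
move: {2}#|P| (leqnn #|P|) => c; elim: c P Q k => [|c IH] P Q [|k] cP dPQ hall;
  try by exists [::].
  by have := hall_condition_card hall; lia.
(* A tight set S0 splits the problem in two; without one, any edge can be matched. *)
have [/existsP [S0 /and4P [sS0 S0_nz S0_P tight]] | no_tight] := boolP [exists S0 : {set T},
    [&& S0 \subset P, S0 != set0, S0 != P & #|P :\: S0| + #|nbhd_in Q S0| <= k.+1]].
  have ltS0 : #|S0| < #|P| by apply: proper_card; rewrite properEneq S0_P sS0.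
  have gtS0 : 0 < #|S0| by rewrite card_gt0.
  have sN := nbhd_in_sub Q S0.
  have [M1 match1 size1] : exists2 M,
      matching_between S0 (nbhd_in Q S0) M & size M = #|nbhd_in Q S0|.
    apply: IH; first lia.
    - exact: disjointWl sS0 (disjointWr sN dPQ).
    - exact: hall_condition_tight_in hall sS0 tight.
  have [M2 match2 size2] : exists2 M,
      matching_between (P :\: S0) (Q :\: nbhd_in Q S0) M & size M = #|P :\: S0|.
    apply: IH.
    - by rewrite cardsDS //; lia.
    - exact: disjointWl (subsetDl _ _) (disjointWr (subsetDl _ _) dPQ).
    - exact: hall_condition_tight_out hall sS0 tight.
  exists (M1 ++ M2); first exact: matching_between_cat dPQ sS0 sN match1 match2.
  by have := hall S0 sS0; rewrite size_cat size1 size2; lia.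
have slack (S : {set T}) : S \subset P -> S != set0 -> S != P ->
    k.+1 < #|P :\: S| + #|nbhd_in Q S|.
  move=> sS S_nz S_P; rewrite ltnNge; apply: contraNN no_tight => le.
  by apply/existsP; exists S; rewrite sS S_nz S_P.
have /card_gt0P [q] : 0 < #|nbhd_in Q P|.
  by have := hall P (subxx P); rewrite setDv cards0; lia.
rewrite inE => /andP [qQ /existsP [p /andP [pP hpq]]].
have [M match_M size_M] : exists2 M, matching_between (P :\ p) (Q :\ q) M & size M = k.
  apply: IH.
  - by move: cP; rewrite (cardsD1 p P) pP.
  - exact: disjointWl (subsetDl _ _) (disjointWr (subsetDl _ _) dPQ).
  - exact: hall_condition_remove hall slack pP.
exists ((p, q) :: M); last by rewrite /= size_M.
rewrite -cat1s; apply: (matching_between_cat dPQ _ _ _ match_M); rewrite ?sub1set //.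
rewrite /matching_between /= /edge_between /= !inE !eqxx hpq /= andbT.
by apply: contraTneq pP => ->; rewrite (disjointFl dPQ qQ).
Qed.

Lemma connected_matching_of_hall X Y r k : [disjoint X & Y] ->
  hall_condition (comp_in H X r) (comp_in H Y r) k -> connected_matching H k.
Proof.
move=> dXY hall.
have dPQ := disjointWl (comp_in_sub H X r) (disjointWr (comp_in_sub H Y r) dXY).
have [M /andP [allM uM] size_M] := hall_deficiency dPQ hall.
exists M; split => //; last exists r.
  by split => //; apply: sub_all allM => -[a b] /and3P [].
by apply: sub_all allM => -[a b] /and3P [/=]; rewrite !inE => /andP [_ ->] /andP [_ ->].
Qed.

Lemma hall_obstruction X Y r k : [disjoint X & Y] -> ~ connected_matching H k ->
  exists2 S : {set T}, S \subset comp_in H X r &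
    #|comp_in H X r :\: S| + #|nbhd_in (comp_in H Y r) S| < k.
Proof.
move=> dXY no_match.
have [/existsP [S /andP [sS lt]] | no_cover] := boolP [exists S : {set T},
    (S \subset comp_in H X r) && (#|comp_in H X r :\: S| + #|nbhd_in (comp_in H Y r) S| < k)].
  by exists S.
case: no_match; apply: (connected_matching_of_hall (r := r) dXY) => S sS.
by move: no_cover; rewrite negb_exists => /forallP /(_ S); rewrite sS -leqNgt.
Qed.

End HallDeficiency.

Section DenseBipartite.
Variables (T : finType) (e red : rel T) (N n : nat).
Hypotheses (e_sym : symmetric e) (red_sym : symmetric red).
Hypotheses (n_pos : 0 < n) (n_half : 2 * n <= N).
Hypothesis min_degree : forall v, 3 * N < 4 * degree e v.
Implicit Types X Y A B S P W Q K L : {set T}.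

Local Notation blue := (blue_sub e red).
Local Notation redg := (red_sub e red).

Definition nbhd (v : T) : {set T} := [set u | e v u].

Definition red_free (A B : {set T}) : Prop :=
  forall a b, a \in A -> b \in B -> e a b -> ~~ red a b.

Definition sides (X Y : {set T}) : Prop :=
  [/\ #|X| = N, #|Y| = N, {in X, forall x, nbhd x \subset Y}
    & {in Y, forall y, nbhd y \subset X}].

Definition blue_thick (X Y : {set T}) : Prop :=
  exists r, n <= #|comp_in blue X r| /\ n <= #|comp_in blue Y r|.

Lemma sides_sym X Y : sides X Y -> sides Y X.
Proof. by case. Qed.

Lemma blue_thick_sym X Y : blue_thick Y X -> blue_thick X Y.
Proof. by case=> r [hY hX]; exists r. Qed.

Lemma red_free_sym A B : red_free A B -> red_free B A.
Proof. by move=> rAB b a bB aA eba; rewrite red_sym rAB // e_sym. Qed.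

Lemma blue_edge a b : e a b -> ~~ red a b -> connect blue a b.
Proof. by move=> eab nrab; apply: connect1; rewrite /blue_sub eab. Qed.

Lemma red_edge a b : e a b -> red a b -> connect redg a b.
Proof. by move=> eab rab; apply: connect1; rewrite /red_sub eab. Qed.

Lemma blue_edge_of_red_apart a b : e a b -> ~~ connect redg a b -> connect blue a b.
Proof. by move=> eab ncr; apply: blue_edge eab (contra (red_edge eab) ncr). Qed.

Lemma connect_blue_sym : connect_sym blue.
Proof. by apply: sym_connect_sym => a b; rewrite /blue_sub e_sym red_sym. Qed.

Lemma connect_red_sym : connect_sym redg.
Proof. by apply: sym_connect_sym => a b; rewrite /red_sub e_sym red_sym. Qed.

Lemma red_free_comp X Y r : red_free (comp_in redg X r) (Y :\: comp_in redg Y r).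
Proof.
move=> a b; rewrite !inE => /andP [_ cra] /andP [nb bY] eab; apply/negP => rab.
by move: nb; rewrite bY (connect_trans cra (red_edge eab rab)).
Qed.

Lemma card_nbhdI X Y v B : sides X Y -> v \in X -> B \subset Y ->
  4 * #|B| < N + 4 * #|nbhd v :&: B|.
Proof.
case=> _ cY nX _ vX sB.
have := cardsID (nbhd v) B; rewrite setIC.
have : #|B :\: nbhd v| <= #|Y :\: nbhd v| by apply/subset_leq_card/setSD.
rewrite (cardsDS (nX v vX)) cY.
have : 3 * N < 4 * #|nbhd v| := min_degree v.
lia.
Qed.

Lemma exists_nbhd_in X Y v B : sides X Y -> v \in X -> B \subset Y -> N <= 4 * #|B| ->
  exists2 u, e v u & u \in B.
Proof.
move=> sXY vX sB hB.
have /card_gt0P [u] : 0 < #|nbhd v :&: B| by have := card_nbhdI sXY vX sB; lia.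
by rewrite !inE => /andP [evu uB]; exists u.
Qed.

Lemma card_common_nbhdI X Y a a' B : sides X Y -> a \in X -> a' \in X -> B \subset Y ->
  2 * #|B| < N + 2 * #|nbhd a :&: nbhd a' :&: B|.
Proof.
move=> sXY aX a'X sB.
have := card_nbhdI sXY aX sB; have := card_nbhdI sXY a'X sB.
have := cardsUI (nbhd a :&: B) (nbhd a' :&: B).
rewrite setIACA setIid.
have : #|(nbhd a :&: B) :|: (nbhd a' :&: B)| <= #|B|.
  by apply: subset_leq_card; rewrite subUset !subsetIr.
lia.
Qed.

Lemma blue_linked X Y A B : sides X Y -> A \subset X -> B \subset Y -> red_free A B ->
  N <= 2 * #|B| -> {in A &, forall a a', connect blue a a'}.
Proof.
move=> sXY sA sB rAB hB a a' aA a'A.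
have /card_gt0P [b] : 0 < #|nbhd a :&: nbhd a' :&: B|.
  by have := card_common_nbhdI sXY (subsetP sA _ aA) (subsetP sA _ a'A) sB; lia.
rewrite !inE => /andP [/andP [eab ea'b] bB].
apply: connect_trans (blue_edge eab (rAB _ _ aA bB eab)) _.
by rewrite connect_blue_sym; apply: blue_edge ea'b (rAB _ _ a'A bB ea'b).
Qed.

Lemma blue_reach X Y A B r : sides X Y -> A \subset X -> B \subset Y -> red_free A B ->
  N <= 4 * #|B| -> {in B, forall b, connect blue r b} -> {in A, forall a, connect blue r a}.
Proof.
move=> sXY sA sB rAB hB rB a aA.
have [b eab bB] := exists_nbhd_in sXY (subsetP sA _ aA) sB hB.
apply: connect_trans (rB b bB) _.
by rewrite connect_blue_sym; apply: blue_edge eab (rAB _ _ aA bB eab).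
Qed.

Lemma card_blue_nbhd X Y A B r x : sides X Y -> x \in X -> x \in A -> B \subset Y ->
  red_free A B -> connect blue r x -> 4 * #|B| < N + 4 * #|comp_in blue Y r|.
Proof.
move=> sXY xX xA sB rAB crx.
have : #|nbhd x :&: B| <= #|comp_in blue Y r|.
  apply: card_comp_in; first by apply: subset_trans (subsetIr _ _) sB.
  move=> u; rewrite !inE => /andP [exu uB].
  exact: connect_trans crx (blue_edge exu (rAB _ _ xA uB exu)).
by have := card_nbhdI sXY xX sB; lia.
Qed.

Record blue_frame X Y S P W Q : Prop := BlueFrame {
  frame_SP : S \subset P; frame_PX : P \subset X; frame_WQ : W \subset Q; frame_QY : Q \subset Y;
  frame_SQ : red_free S Q; frame_PW : red_free P W }.

Lemma blue_frame_sym X Y S P W Q : blue_frame X Y S P W Q -> blue_frame Y X W Q S P.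
Proof. by case=> *; split=> //; apply: red_free_sym. Qed.

Lemma blue_thick_of_large_frame X Y S P W Q : sides X Y -> blue_frame X Y S P W Q ->
  n <= #|P| -> n <= #|Q| -> N <= 2 * #|P| -> N <= 4 * #|S| -> N <= 4 * #|W| -> 0 < #|W| ->
  blue_thick X Y.
Proof.
move=> sXY [sSP sPX sWQ sQY rSQ rPW] nP nQ hP hS hW /card_gt0P [y0 y0W].
have sYX := sides_sym sXY.
have sWY := subset_trans sWQ sQY; have sSX := subset_trans sSP sPX.
have Wc : {in W, forall y, connect blue y0 y}.
  by move=> y yW; apply: (blue_linked sYX sWY sPX (red_free_sym rPW) hP y0W yW).
have Pc := blue_reach sXY sPX sWY rPW hW Wc.
have Qc : {in Q, forall y, connect blue y0 y}.
  apply: blue_reach sYX sQY sSX (red_free_sym rSQ) hS _ => x xS.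
  exact: Pc (subsetP sSP x xS).
exists y0; split; first exact: leq_trans nP (card_comp_in sPX Pc).
exact: leq_trans nQ (card_comp_in sQY Qc).
Qed.

Lemma blue_thick_of_frame_small_W X Y S P W Q : sides X Y -> blue_frame X Y S P W Q ->
  n <= #|Q| -> N <= #|S| + #|Q| -> N <= #|P| + #|W| -> N <= 4 * #|S| -> 4 * #|W| < N ->
  0 < #|W| -> blue_thick X Y.
Proof.
move=> sXY [sSP sPX sWQ sQY rSQ rPW] nQ hSQ hPW hS hW /card_gt0P [y0 y0W].
have sYX := sides_sym sXY.
have sSX := subset_trans sSP sPX.
have y0Q := subsetP sWQ y0 y0W; have y0Y := subsetP sQY y0 y0Q.
exists y0; split.
  by have := card_blue_nbhd sYX y0Y y0W sPX (red_free_sym rPW) (connect0 _ y0); lia.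
have [x1 ey0x1 x1S] := exists_nbhd_in sYX y0Y sSX hS.
have c01 := blue_edge ey0x1 (red_free_sym rSQ y0Q x1S ey0x1).
have Qc : {in Q, forall y, connect blue y0 y}.
  have [hQ | hQ] := leqP N (2 * #|Q|).
    apply: (blue_reach sYX sQY sSX (red_free_sym rSQ) hS) => x xS.
    exact: connect_trans c01 (blue_linked sXY sSX sQY rSQ hQ x1S xS).
  have hS2 : N <= 2 * #|S| by clear -hSQ hQ; lia.
  by move=> y yQ; apply: (blue_linked sYX sQY sSX (red_free_sym rSQ) hS2 y0Q yQ).
exact: leq_trans nQ (card_comp_in sQY Qc).
Qed.

Lemma blue_thick_of_frame X Y S P W Q : sides X Y -> blue_frame X Y S P W Q ->
  n <= #|P| -> n <= #|Q| -> N <= #|S| + #|Q| -> N <= #|P| + #|W| ->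
  0 < #|S| -> 0 < #|W| -> N <= 2 * (#|S| + #|W|) -> blue_thick X Y.
Proof.
move=> sXY fr nP nQ hSQ hPW S_pos W_pos hSW.
have sYX := sides_sym sXY; have frC := blue_frame_sym fr.
have leSP := subset_leq_card (frame_SP fr).
have [hW | hW] := ltnP (4 * #|W|) N.
  by apply: (blue_thick_of_frame_small_W sXY fr nQ hSQ hPW _ hW W_pos); lia.
have [hS | hS] := ltnP (4 * #|S|) N.
  by apply: blue_thick_sym; apply: (blue_thick_of_frame_small_W sYX frC nP _ _ hW hS S_pos); lia.
have [hP | hP] := leqP N (2 * #|P|).
  exact: blue_thick_of_large_frame sXY fr nP nQ hP hS hW W_pos.
by apply: blue_thick_sym; apply: (blue_thick_of_large_frame sYX frC nQ nP _ hW hS S_pos); lia.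
Qed.

Lemma blue_comp_large_split X Y x y y' : sides X Y -> y \in Y -> y' \in Y ->
  ~~ connect redg y y' -> connect blue x y -> connect blue x y' -> n <= #|comp_in blue X x|.
Proof.
move=> sXY yY y'Y nyy' cxy cxy'.
have [cX _ _ _] := sXY.
have := card_common_nbhdI (sides_sym sXY) yY y'Y (subxx X).
have : #|nbhd y :&: nbhd y' :&: X| <= #|comp_in blue X x|.
  apply: card_comp_in; first exact: subsetIr.
  move=> z; rewrite !inE => /andP [/andP [eyz ey'z] _].
  have [cyz | ncyz] := boolP (connect redg y z).
    apply: connect_trans cxy' (blue_edge_of_red_apart ey'z _).
    apply/negP => cy'z; case/negP: nyy'.
    by apply: connect_trans cyz _; rewrite connect_red_sym.
  exact: connect_trans cxy (blue_edge_of_red_apart eyz ncyz).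
lia.
Qed.

Lemma blue_comp_large_joined X Y x y : sides X Y -> x \in X -> y \in Y -> e x y ->
  ~~ connect redg x y -> #|comp_in redg Y x| < n -> #|comp_in redg X y| < n ->
  {in Y, forall y', connect blue x y' -> connect redg y y'} -> n <= #|comp_in blue X x|.
Proof.
move=> sXY xX yY exy nxy small_x small_y joined.
have [cX _ nX _] := sXY; have sYX := sides_sym sXY.
have cxy := blue_edge_of_red_apart exy nxy.
have sNx : nbhd x \subset comp_in redg Y y :|: comp_in redg Y x.
  apply/subsetP => z zN; have zY := subsetP (nX x xX) z zN; rewrite inE in zN.
  rewrite !inE zY /=; apply/orP; have [cxz | nxz] := boolP (connect redg x z).
    by right.
  by left; apply: joined zY (blue_edge_of_red_apart zN nxz).
have big_y : N <= 4 * #|comp_in redg Y y|.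
  have := subset_leq_cardU sNx; have : 3 * N < 4 * #|nbhd x| := min_degree x.
  lia.
have rLY := @red_free_comp Y X y.
have yLY : y \in comp_in redg Y y by rewrite inE yY connect0.
have sLY : comp_in redg Y y \subset Y by apply: comp_in_sub.
have cXLX : #|X :\: comp_in redg X y| = N - #|comp_in redg X y|.
  by rewrite cardsDS ?cX //; apply: comp_in_sub.
have LYc : {in comp_in redg Y y, forall z, connect blue x z}.
  move=> z zL; apply: connect_trans cxy (blue_linked sYX sLY (subsetDl _ _) rLY _ yLY zL).
  lia.
have := card_comp_in (subsetDl _ _)
  (blue_reach sXY (subsetDl _ _) sLY (red_free_sym rLY) big_y LYc).
lia.
Qed.

Lemma blue_comp_large X Y x y : sides X Y -> x \in X -> y \in Y -> e x y ->
  ~~ connect redg x y -> #|comp_in redg Y x| < n -> #|comp_in redg X y| < n ->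
  n <= #|comp_in blue X x|.
Proof.
move=> sXY xX yY exy nxy small_x small_y.
have cxy := blue_edge_of_red_apart exy nxy.
have [/existsP [y' /and3P [y'Y cxy' nyy']] | joined] :=
  boolP [exists y' : T, [&& y' \in Y, connect blue x y' & ~~ connect redg y y']].
  exact: blue_comp_large_split sXY yY y'Y nyy' cxy cxy'.
apply: blue_comp_large_joined sXY xX yY exy nxy small_x small_y _ => y' y'Y cxy'.
apply/negPn/negP => nyy'; case/negP: joined.
by apply/existsP; exists y'; rewrite y'Y cxy' nyy'.
Qed.

Lemma blue_thick_of_small_red_comps X Y : sides X Y ->
  (forall r, #|comp_in redg X r| < n /\ #|comp_in redg Y r| < n) -> blue_thick X Y.
Proof.
move=> sXY small.
have [cX _ nX _] := sXY.
have /card_gt0P [x xX] : 0 < #|X| by rewrite cX; lia.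
have [_ small_x] := small x.
have /card_gt0P [y] : 0 < #|nbhd x :\: comp_in redg Y x|.
  have : 3 * N < 4 * #|nbhd x| := min_degree x.
  have := cardsD (nbhd x) (comp_in redg Y x).
  have : #|nbhd x :&: comp_in redg Y x| <= #|comp_in redg Y x|.
    by apply/subset_leq_card/subsetIr.
  lia.
rewrite !inE => /andP [nyK exy].
have yY : y \in Y by apply: (subsetP (nX x xX)); rewrite inE.
have nxy : ~~ connect redg x y by rewrite yY /= in nyK.
have [small_y _] := small y.
exists x; split; first exact: blue_comp_large sXY xX yY exy nxy small_x small_y.
apply: (leq_trans _ (subset_leq_card (comp_in_trans Y (blue_edge_of_red_apart exy nxy)))).
apply: blue_comp_large (sides_sym sXY) yY xX _ _ small_y small_x.
  by rewrite e_sym.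
by rewrite connect_red_sym.
Qed.

Lemma blue_thick_of_red_comp X Y K L : sides X Y -> K \subset X -> L \subset Y ->
  red_free K (Y :\: L) -> n <= #|K| -> #|L| <= #|K| -> #|L| + n <= N -> blue_thick X Y.
Proof.
move=> sXY sK sL rKL nK LK Ln.
have [_ cY _ _] := sXY.
have cYL : #|Y :\: L| = N - #|L| by rewrite cardsDS ?cY.
have frame : blue_frame X Y K K (Y :\: L) (Y :\: L) by split; rewrite ?subxx ?subsetDl.
by apply: (blue_thick_of_frame sXY frame); lia.
Qed.

Variable m : nat.
Hypothesis N_eq : N.+1 = m + n.

Lemma blue_thick_of_red_cover X Y P0 Q0 S0 : sides X Y -> P0 \subset X -> Q0 \subset Y ->
  red_free P0 (Y :\: Q0) -> red_free (X :\: P0) Q0 -> m <= #|P0| -> m <= #|Q0| ->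
  S0 \subset P0 -> #|P0 :\: S0| + #|nbhd_in redg Q0 S0| < m -> blue_thick X Y.
Proof.
move=> sXY sP0 sQ0 rP0 rQ0 mP0 mQ0 sS0 cover.
have [cX cY _ _] := sXY.
have sN := nbhd_in_sub redg Q0 S0.
have frame : blue_frame X Y S0 (X :\: (P0 :\: S0))
    (Q0 :\: nbhd_in redg Q0 S0) (Y :\: nbhd_in redg Q0 S0).
  split; [| exact: subsetDl | exact: setSD | exact: subsetDl | |].
  - apply/subsetP => z zS0; rewrite !inE zS0 /=.
    exact: subsetP sP0 z (subsetP sS0 z zS0).
  - move=> a b aS0 /setDP [bY bN] eab; apply/negP => rab.
    have aP0 := subsetP sS0 a aS0.
    have bQ0 : b \in Q0.
      by move: rab; apply: contraTT => nbQ0; apply: rP0 _ _ aP0 _ eab; rewrite inE nbQ0 bY.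
    by case/negP: bN; apply: mem_nbhd_in aS0 bQ0 _; rewrite /red_sub eab rab.
  - move=> a b /setDP [aX aCX] /setDP [bQ0 bN] eab; apply/negP => rab.
    have aP0 : a \in P0.
      by move: rab; apply: contraTT => naP0; apply: rQ0 _ _ _ bQ0 eab; rewrite inE naP0 aX.
    have aS0 : a \in S0 by move: aCX; rewrite inE aP0 andbT negbK.
    by case/negP: bN; apply: mem_nbhd_in aS0 bQ0 _; rewrite /red_sub eab rab.
have cCX : #|P0 :\: S0| = #|P0| - #|S0| := cardsDS sS0.
have cXCX : #|X :\: (P0 :\: S0)| = N - #|P0 :\: S0|.
  by rewrite cardsDS ?cX // (subset_trans (subsetDl _ _) sP0).
have cYN : #|Y :\: nbhd_in redg Q0 S0| = N - #|nbhd_in redg Q0 S0|.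
  by rewrite cardsDS ?cY // (subset_trans sN sQ0).
have cQ0N := cardsDS sN.
have := subset_leq_card sS0; have := subset_leq_card sN; have := subset_leq_card sP0.
by rewrite cX => *; apply: (blue_thick_of_frame sXY frame); lia.
Qed.

Lemma blue_thick_of_no_red_matching X Y : sides X Y -> [disjoint X & Y] ->
  ~ connected_matching redg m -> blue_thick X Y.
Proof.
move=> sXY dXY no_match.
have sYX := sides_sym sXY.
have comp_sub Z r : comp_in redg Z r \subset Z by apply: comp_in_sub.
have [r /= mXY | no_big] :=
  pickP [pred r | m <= minn #|comp_in redg X r| #|comp_in redg Y r|].
  have [S0 sS0 cover] := hall_obstruction r dXY no_match.
  by apply: (blue_thick_of_red_cover sXY (comp_sub X r) (comp_sub Y r)
    (@red_free_comp X Y r) (red_free_sym (@red_free_comp Y X r)) _ _ sS0 cover); lia.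
have [r /= mid | small] :=
  pickP [pred r | n <= maxn #|comp_in redg X r| #|comp_in redg Y r|].
  have /negbT := no_big r; rewrite /= -ltnNge => lt_m.
  have [LK | KL] := leqP #|comp_in redg Y r| #|comp_in redg X r|.
    by apply: (blue_thick_of_red_comp sXY (comp_sub X r) (comp_sub Y r)
      (@red_free_comp X Y r) _ LK); lia.
  apply: blue_thick_sym; apply: (blue_thick_of_red_comp sYX (comp_sub Y r) (comp_sub X r)
    (@red_free_comp Y X r) _ (ltnW KL)); lia.
apply: blue_thick_of_small_red_comps sXY _ => r.
by have /negbT := small r; rewrite /= -ltnNge; lia.
Qed.

End DenseBipartite.

Theorem lemma3p1 (m n : nat) (T : finType) (e red : rel T) (V1 : {set T}) :
  0 < n -> n < m ->
  simple_graph e ->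
  bipartite_with e V1 ->
  #|V1| = m + n - 1 -> #|~: V1| = m + n - 1 ->
  (forall v : T, 3 * (m + n - 1) < 4 * degree e v) ->
  symmetric red ->
  ~ connected_matching (red_sub e red) m ->
  exists r : T,
    n <= #|[set y in V1 | connect (blue_sub e red) r y]| /\
    n <= #|[set y in ~: V1 | connect (blue_sub e red) r y]|.
Proof.
move=> n_pos n_lt_m [e_sym _] bip cV1 cV2 min_deg red_sym no_match.
have sides_V1 : sides e (m + n - 1) V1 (~: V1).
  split=> // v vV; apply/subsetP => u; rewrite inE => /bip; move: vV; rewrite !inE;
  by case: (v \in V1); case: (u \in V1).
have dV1 : [disjoint V1 & ~: V1] by rewrite disjoints_subset setCK.
apply: (blue_thick_of_no_red_matching e_sym red_sym n_pos _ min_deg _ sides_V1 dV1 no_match);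
  lia.
Qed.
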